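(* Let $\mathcal{X}=\mathcal{X}^{(1)}\times\cdots\times\mathcal{X}^{(d)}$ with each $\mathcal{X}^{(j)}$ finite, $(S_i)_{i=1}^n$ a partition of $\{1,\dots,d\}$ into pairwise disjoint nonempty sets, $\pi\in\mathcal{P}(\mathcal{X})$ positive and $P\in\mathcal{L}(\mathcal{X})$. Then $\mathbb{I}^\pi(P)=\mathbb{I}^\pi(P,\mathcal{L}_{\otimes_{i=1}^nS_i}(\mathcal{X}))+\mathbb{I}^\pi(\otimes_{i=1}^nP^{(S_i)}_\pi)=\mathbb{I}^\pi(P,\mathcal{L}_{\otimes_{i=1}^nS_i}(\mathcal{X}))+\sum_{i=1}^n\mathbb{I}^{\pi^{(S_i)}}(P^{(S_i)}_\pi)$.
   Context: $D_{KL}^{\pi}(M\|L):=\sum_{x,y}\pi(x)M(x,y)\ln\frac{M(x,y)}{L(x,y)}$. For $S\subseteq\{1,\dots,d\}$: $\mathcal{X}^{(S)}=\prod_{j\in S}\mathcal{X}^{(j)}$, $\pi^{(S)}(x^{(S)})=\sum_{x^{(-S)}}\pi(x)$, $P^{(S)}_\pi(x^{(S)},y^{(S)}):=\frac{\sum_{x^{(-S)},y^{(-S)}}\pi(x)P(x,y)}{\pi^{(S)}(x^{(S)})}$. Tensor products: $(\otimes_iL_i)(x,y)=\prod_iL_i(x^{(S_i)},y^{(S_i)})$. $\mathcal{L}_{\otimes_{i=1}^nS_i}(\mathcal{X})$ is the set of transition matrices of the form $\otimes_{i=1}^nL_i$ with $L_i\in\mathcal{L}(\mathcal{X}^{(S_i)})$,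 and $\mathbb{I}^\pi(P,\mathcal{L}_{\otimes_{i=1}^nS_i}(\mathcal{X})):=\min_{L_i\in\mathcal{L}(\mathcal{X}^{(S_i)})}D^\pi_{KL}(P\|\otimes_{i=1}^nL_i)$. For $\mu$ on $\prod_{j\in T}\mathcal{X}^{(j)}$ and $Q$ a transition matrix there, the distance to independence is $\mathbb{I}^\mu(Q):=\min_{L_j\in\mathcal{L}(\mathcal{X}^{(j)}),j\in T}D^\mu_{KL}(Q\|\otimes_{j\in T}L_j)$. *)

From HB Require Import structures.
From mathcomp Require Import all_boot all_order all_algebra.
From mathcomp Require Import boolp classical_sets reals constructive_ereal ereal exp.
Set Implicit Arguments. Unset Strict Implicit. Unset Printing Implicit Defensive.
Import Order.TTheory GRing.Theory Num.Theory.
Local Open Scope ring_scope.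

Section Defs.
Variable R : realType.

Definition prodT (I : finType) (Y : I -> finType) := {dffun forall i : I, Y i}.

Definition subT (I : finType) (S : {set I}) := {j : I | j \in S}.
Definition XS (I : finType) (Y : I -> finType) (S : {set I}) :=
  prodT (fun j : subT S => Y (val j)).

Definition restr (I : finType) (Y : I -> finType) (S : {set I}) (x : prodT Y)
  : XS Y S := @finfun _ (fun j : subT S => Y (val j)) (fun j => x (val j)).

Definition is_distr (T : finType) (mu : T -> R) :=
  (forall x, 0 <= mu x) /\ \sum_(x : T) mu x = 1.
Definition is_pos (T : finType) (mu : T -> R) := forall x, 0 < mu x.
Definition is_trans (T : finType) (L : T -> T -> R) :=
  (forall x y, 0 <= L x y) /\ (forall x, \sum_(y : T) L x y = 1).

Definition KL (T : finType) (pi : T -> R) (M L : T -> T -> R) : \bar R :=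
  (\sum_(x : T) \sum_(y : T)
     (if (pi x * M x y == 0)%R then 0%E
      else if (L x y == 0)%R then +oo%E
      else ((pi x * M x y * ln (M x y / L x y))%R)%:E))%E.

Definition tensor (I : finType) (Y : I -> finType) (n : nat) (S : 'I_n -> {set I})
  (Ls : forall i : 'I_n, XS Y (S i) -> XS Y (S i) -> R) : prodT Y -> prodT Y -> R :=
  fun x y => \prod_(i < n) Ls i (restr (S i) x) (restr (S i) y).

Definition Ipart (I : finType) (Y : I -> finType) (pi : prodT Y -> R)
  (P : prodT Y -> prodT Y -> R) (n : nat) (S : 'I_n -> {set I}) : \bar R :=
  ereal_inf [set KL pi P (tensor Ls) | Ls in
     [set Ls : forall i : 'I_n, XS Y (S i) -> XS Y (S i) -> R |
        forall i, is_trans (Ls i)]]%classic.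

Definition Idep (I : finType) (Y : I -> finType) (mu : prodT Y -> R)
  (Q : prodT Y -> prodT Y -> R) : \bar R :=
  ereal_inf [set KL mu Q (fun x y => \prod_(i : I) Ls i (x i) (y i)) | Ls in
     [set Ls : forall i : I, Y i -> Y i -> R | forall i, is_trans (Ls i)]]%classic.

Definition marg (I : finType) (Y : I -> finType) (pi : prodT Y -> R) (S : {set I})
  : XS Y S -> R := fun xs => \sum_(x : prodT Y | restr S x == xs) pi x.

Definition kmarg (I : finType) (Y : I -> finType) (pi : prodT Y -> R)
  (P : prodT Y -> prodT Y -> R) (S : {set I}) : XS Y S -> XS Y S -> R :=
  fun xs ys => (\sum_(x : prodT Y | restr S x == xs)
                 \sum_(y : prodT Y | restr S y == ys) pi x * P x y) / @marg I Y pi S xs.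

Definition is_partition (I : finType) (n : nat) (S : 'I_n -> {set I}) :=
  (forall i, S i != finset.set0) /\ (forall i j, i != j -> [disjoint S i & S j]) /\
  (forall k : I, exists i, k \in S i).

End Defs.
Arguments restr {I Y} S x.
Arguments marg {R I Y} pi S.
Arguments kmarg {R I Y} pi P S.
Arguments Ipart {R I Y} pi P {n} S.

From HB Require Import structures.
From mathcomp Require Import all_boot all_order all_algebra.
From mathcomp Require Import boolp classical_sets reals constructive_ereal ereal exp.
From mathcomp Require Import lra.
Set Implicit Arguments. Unset Strict Implicit. Unset Printing Implicit Defensive.
Import Order.TTheory GRing.Theory Num.Theory.
Local Open Scope ring_scope.

(* View the blocks [S i] and the single coordinates [j] alike as coordinate maps
   [r k] on the product space. For any family of coordinate maps and any product
   kernel [(x) L_k], splitting the logarithm of the product gives the Pythagorean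
   identity
     KL(P || (x) L_k) = KL(P || (x) P^(k)) + sum_k KL_{pi^(k)}(P^(k) || L_k),
   and each summand is nonnegative (Gibbs), so the infimum defining the distance
   to a product class is attained at the kernel marginals P^(k). For the blocks
   and L_i = (x)_{j in S_i} P^(j), whose product is (x)_j P^(j), this reads
   I(P) = I(P, L_(x)S_i) + sum_i I(P^(S_i)). The same identity for
   T = (x)_i P^(S_i), whose block marginals are the P^(S_i) (so that its first
   term vanishes) and whose coordinate marginals are the P^(j), gives
   I(T) = sum_i I(P^(S_i)). *)

Lemma sum_dffun_prod (R : comNzRingType) (I : finType) (T_ : I -> finType)
    (g : forall i, T_ i -> R) :
  \sum_(f : {dffun forall i, T_ i}) \prod_i g i (f i) = \prod_i \sum_(t : T_ i) g i t.
Proof.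
have untag_g i (u : {i : I & T_ i}) : untag 0 (g i) u = untag 0 [ffun t => g i t] u.
  by rewrite /untag; case: eqP => // e; rewrite ffunE.
under [RHS]eq_bigr do rewrite big_tag.
rewrite bigA_distr_big_dep.
under [RHS]eq_bigr do under eq_bigr do rewrite untag_g.
rewrite -(@big_fprod R 0 1 *%R +%R I T_ (fun i => [ffun t => g i t])).
rewrite (reindex (@dffun_of_fprod I T_)); last exact/onW_bij/dffun_of_fprod_bij.
by apply: eq_bigr => t _; apply: eq_bigr => i _; rewrite !ffunE.
Qed.

Lemma sum_dffun_prod_fiber (R : comNzRingType) (I : finType) (T_ : I -> finType)
    (g : forall i, T_ i -> R) (i0 : I) (t0 : T_ i0) :
  \sum_(f : {dffun forall i, T_ i} | f i0 == t0) \prod_i g i (f i) =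
  g i0 t0 * \prod_(i | i != i0) \sum_(t : T_ i) g i t.
Proof.
(* Comparing tagged values avoids casting [t : T_ i] to [T_ i0]. *)
pose h i (t : T_ i) := g i t * ((i != i0) || (Tagged T_ t == Tagged T_ t0))%:R.
have h_i0 t : h i0 t = g i0 t * (t == t0)%:R by rewrite /h eqxx eq_Tagged.
have h_out i t : i != i0 -> h i t = g i t by move=> /negbTE ne; rewrite /h ne mulr1.
transitivity (\sum_(f : {dffun forall i, T_ i}) \prod_i h i (f i)).
  rewrite big_mkcond; apply: eq_bigr => f _.
  rewrite [RHS](bigD1 i0) //= h_i0 (eq_bigr _ (fun i => h_out i (f i))).
  by rewrite [in LHS](bigD1 i0) //= mulrAC; case: eqP; rewrite ?mulr1 ?mulr0.
rewrite sum_dffun_prod (bigD1 i0) //=; congr (_ * _).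
  rewrite (bigD1 t0) //= h_i0 eqxx mulr1 big1 ?addr0 // => t /negbTE ne.
  by rewrite h_i0 ne mulr0.
by apply: eq_bigr => i ne; apply: eq_bigr => t _; rewrite h_out.
Qed.

Lemma ln_prod (R : realType) (I : finType) (F : I -> R) :
  (forall i, 0 < F i) -> ln (\prod_i F i) = \sum_i ln (F i).
Proof.
move=> F_gt0; suff [] : 0 < \prod_i F i /\ ln (\prod_i F i) = \sum_i ln (F i) by [].
apply: (big_ind2 (fun a b => 0 < a /\ ln a = b)) => [|a1 b1 a2 b2 [a1_gt0 <-] [a2_gt0 <-]|//].
- by rewrite ln1.
- by rewrite mulr_gt0 // lnM.
Qed.

Lemma ln_le_subr1 (R : realType) (x : R) : 0 < x -> ln x <= x - 1.
Proof. by move=> x_gt0; have := @le_ln1Dx R (x - 1); rewrite addrCA subrr addr0; apply; lra. Qed.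

Lemma le_mul_ln_ratio (R : realType) (b c : R) : 0 < b -> 0 < c ->
  b - c <= b * (ln b - ln c).
Proof.
move=> b_gt0 c_gt0; have := ln_le_subr1 (divr_gt0 c_gt0 b_gt0).
rewrite ln_div ?posrE // => /(ler_wpM2l (ltW b_gt0)).
rewrite [X in _ <= X]mulrBr mulr1 mulrCA divff ?gt_eqF // mulr1.
by rewrite -[ln b - ln c]opprB mulrN lerNr opprB.
Qed.

Lemma ereal_inf_min (R : realType) (A : set (\bar R)) v :
  A v -> (forall y, A y -> (v <= y)%E) -> ereal_inf A = v.
Proof.
move=> Av v_min; apply/le_anti/andP; split; first exact: ereal_inf_lbound.
exact: le_ereal_inf_tmp.
Qed.

Section KullbackLeibler.
Variables (R : realType) (T : finType) (mu : T -> R) (M : T -> T -> R).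

Definition KLsum (L : T -> T -> R) : R :=
  \sum_x \sum_y mu x * M x y * ln (M x y / L x y).

Lemma KL_EFin L : (forall x y, mu x * M x y != 0 -> L x y != 0) ->
  KL mu M L = (KLsum L)%:E.
Proof.
move=> L_neq0; rewrite /KL /KLsum -sumEFin; apply: eq_bigr => x _.
rewrite -sumEFin; apply: eq_bigr => y _.
by case: eqP => [->|/eqP/L_neq0/negbTE ->]; rewrite ?mul0r.
Qed.

Lemma KL_pinfty L x0 y0 : mu x0 * M x0 y0 != 0 -> L x0 y0 = 0 -> KL mu M L = +oo%E.
Proof.
move=> muM_neq0 L0; have term_neqNy x y : (if mu x * M x y == 0 then 0%E
    else if L x y == 0 then +oo%E else (mu x * M x y * ln (M x y / L x y))%:E) != -oo%E.
  by case: (mu x * M x y == 0); case: (L x y == 0).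
apply/esum_eqyP => [x _|].
  by apply/eqP => /esum_eqNyP[y [_ _ /eqP]]; exact/negP/term_neqNy.
exists x0; split; rewrite ?mem_index_enum //.
apply/esum_eqyP => [y _|]; first exact: term_neqNy.
by exists y0; rewrite mem_index_enum (negbTE muM_neq0) L0 eqxx.
Qed.

Lemma eq_KL L1 L2 : (forall x y, mu x * M x y != 0 -> L1 x y = L2 x y) ->
  KL mu M L1 = KL mu M L2.
Proof.
move=> eqL; apply: eq_bigr => x _; apply: eq_bigr => y _.
by case: eqP => // /eqP /eqL ->.
Qed.

Lemma KLsum_self : KLsum M = 0.
Proof.
apply: big1 => x _; apply: big1 => y _.
by have [->|M_neq0] := eqVneq (M x y) 0; rewrite ?mulr0 ?mul0r // divff // ln1 mulr0.
Qed.

End KullbackLeibler.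

Section PushForward.
Variables (R : realType) (T U : finType) (f : T -> U).
Variables (mu : T -> R) (M : T -> T -> R).
Hypothesis mu_ge0 : forall x, 0 <= mu x.
Hypothesis M_trans : is_trans M.

Let M_ge0 x y : 0 <= M x y. Proof. by case: M_trans. Qed.
Let M_rows x : \sum_y M x y = 1. Proof. by case: M_trans. Qed.

Definition margin (u : U) : R := \sum_(x | f x == u) mu x.

Definition edge_margin (u v : U) : R :=
  \sum_(x | f x == u) \sum_(y | f y == v) mu x * M x y.

(* For [f = restr S] this is [kmarg mu M S], the paper's P^(S)_mu. *)
Definition kmargin (u v : U) : R := edge_margin u v / margin u.

(* Where [margin u = 0], [kmargin u] is the zero row ([x / 0 = 0]); completing
   it by the identity row gives a stochastic matrix. *)
Definition kmargin_ext (u v : U) : R :=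
  if margin u == 0 then (v == u)%:R else kmargin u v.

Lemma sum_edge_margin (phi : U -> U -> R) :
  \sum_x \sum_y mu x * M x y * phi (f x) (f y) = \sum_u \sum_v edge_margin u v * phi u v.
Proof.
symmetry; transitivity (\sum_u \sum_v \sum_(x | f x == u)
    \sum_(y | f y == v) mu x * M x y * phi u v).
  apply: eq_bigr => u _; apply: eq_bigr => v _; rewrite big_distrl.
  by apply: eq_bigr => x _; rewrite big_distrl.
rewrite [RHS](partition_big f predT) //=; apply: eq_bigr => u _.
rewrite exchange_big; apply: eq_bigr => x /eqP <-.
rewrite [RHS](partition_big f predT) //=; apply: eq_bigr => v _.
by apply: eq_bigr => y /eqP <-.
Qed.

Lemma edge_margin_rows u : \sum_v edge_margin u v = margin u.
Proof.
rewrite /edge_margin exchange_big; apply: eq_bigr => x _.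
transitivity (\sum_y mu x * M x y); first by rewrite [RHS](partition_big f predT).
by rewrite -big_distrr /= M_rows mulr1.
Qed.

Lemma margin_ge0 u : 0 <= margin u.
Proof. exact: sumr_ge0. Qed.

Lemma edge_margin_ge0 u v : 0 <= edge_margin u v.
Proof. by do 2 apply: sumr_ge0 => ? _; rewrite mulr_ge0. Qed.

Lemma kmargin_ge0 u v : 0 <= kmargin u v.
Proof. by rewrite divr_ge0 ?edge_margin_ge0 ?margin_ge0. Qed.

Lemma le_edge_margin x y : mu x * M x y <= edge_margin (f x) (f y).
Proof.
have muM_ge0 x' y' : 0 <= mu x' * M x' y' by rewrite mulr_ge0.
rewrite /edge_margin (bigD1 x) //= (bigD1 y) //= -addrA lerDl.
by rewrite addr_ge0 // sumr_ge0 // => x' _; rewrite sumr_ge0.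
Qed.

Lemma le_edge_margin_margin u v : edge_margin u v <= margin u.
Proof.
by rewrite -edge_margin_rows (bigD1 v) //= lerDl sumr_ge0 // => v' _; exact: edge_margin_ge0.
Qed.

Lemma margin_kmargin u v : margin u * kmargin u v = edge_margin u v.
Proof.
have [m0|m_neq0] := eqVneq (margin u) 0; last by rewrite mulrC divfK.
by rewrite m0 mul0r; apply/esym/le_anti; rewrite edge_margin_ge0 -m0 le_edge_margin_margin.
Qed.

Lemma kmargin_gt0 x y : mu x * M x y != 0 -> 0 < kmargin (f x) (f y).
Proof.
move=> muM_neq0; have edge_gt0 : 0 < edge_margin (f x) (f y).
  by apply: lt_le_trans (le_edge_margin x y); rewrite lt0r muM_neq0 mulr_ge0.
by rewrite divr_gt0 // (lt_le_trans edge_gt0) // le_edge_margin_margin.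
Qed.

Lemma kmargin_rows u : margin u != 0 -> \sum_v kmargin u v = 1.
Proof. by move=> m_neq0; rewrite -big_distrl /= edge_margin_rows divff. Qed.

Lemma kmargin_ext_trans : is_trans kmargin_ext.
Proof.
split=> [u v|u]; rewrite /kmargin_ext; case: eqVneq => [m0|m_neq0] //.
- exact: kmargin_ge0.
- by rewrite (bigD1 u) //= eqxx big1 ?addr0 // => v /negbTE ->.
- exact: kmargin_rows.
Qed.

Lemma kmargin_extE x y : mu x * M x y != 0 ->
  kmargin_ext (f x) =1 kmargin (f x).
Proof.
move=> /kmargin_gt0 km_gt0 v; rewrite /kmargin_ext ifN //.
by apply: contraTneq km_gt0 => m0; rewrite /kmargin m0 invr0 mulr0 ltxx.
Qed.

Lemma edge_margin_witness u v : edge_margin u v != 0 ->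
  exists x y, [/\ f x = u, f y = v & mu x * M x y != 0].
Proof.
apply: contraNP => no_wit; rewrite /edge_margin big1 // => x /eqP fx.
rewrite big1 // => y /eqP fy; apply/eqP; apply: contra_notT no_wit => muM.
by exists x, y.
Qed.

Section Divergence.
Variable L : U -> U -> R.
Hypothesis L_gt0 : forall x y, mu x * M x y != 0 -> 0 < L (f x) (f y).

Lemma KLsum_kmargin :
  KLsum margin kmargin L = \sum_u \sum_v edge_margin u v * (ln (kmargin u v) - ln (L u v)).
Proof.
apply: eq_bigr => u _; apply: eq_bigr => v _; rewrite margin_kmargin.
have [->|/edge_margin_witness[x [y [<- <- muM]]]] := eqVneq (edge_margin u v) 0.
  by rewrite !mul0r.
by rewrite ln_div ?posrE ?L_gt0 ?kmargin_gt0.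
Qed.

Lemma KLsum_kmargin_ge0 : is_trans L -> 0 <= KLsum margin kmargin L.
Proof.
move=> [L_ge0 L_rows]; rewrite KLsum_kmargin.
apply: le_trans (_ : \sum_u \sum_v (edge_margin u v - margin u * L u v) <= _).
  rewrite big1 // => u _.
  by rewrite sumrB edge_margin_rows -big_distrr /= L_rows mulr1 subrr.
apply: ler_sum => u _; apply: ler_sum => v _.
have [->|/edge_margin_witness[x [y [<- <- muM]]]] := eqVneq (edge_margin u v) 0.
  by rewrite mul0r sub0r oppr_le0 mulr_ge0 ?margin_ge0.
rewrite -margin_kmargin -mulrBr -mulrA ler_wpM2l ?margin_ge0 //.
by rewrite le_mul_ln_ratio ?L_gt0 ?kmargin_gt0.
Qed.

End Divergence.

End PushForward.

Section ProductKernels.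
Variables (R : realType) (T K : finType) (U : K -> finType) (r : forall k, T -> U k).

Definition ktensor (Ls : forall k, U k -> U k -> R) : T -> T -> R :=
  fun x y => \prod_k Ls k (r k x) (r k y).

Variables (mu : T -> R) (M : T -> T -> R).
Hypothesis mu_ge0 : forall x, 0 <= mu x.
Hypothesis M_trans : is_trans M.

Let M_ge0 x y : 0 <= M x y. Proof. by case: M_trans. Qed.

Local Notation kmargins := (fun k => kmargin (r k) mu M).

Lemma KLsum_ktensor (Ls : forall k, U k -> U k -> R) :
  (forall x y, mu x * M x y != 0 -> forall k, 0 < Ls k (r k x) (r k y)) ->
  KLsum mu M (ktensor Ls) =
  KLsum mu M (ktensor kmargins) + \sum_k KLsum (margin (r k) mu) (kmargin (r k) mu M) (Ls k).
Proof.
move=> Ls_gt0.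
have ln_ratio x y : mu x * M x y != 0 ->
    ln (M x y / ktensor Ls x y) = ln (M x y / ktensor kmargins x y) +
    \sum_k (ln (kmargin (r k) mu M (r k x) (r k y)) - ln (Ls k (r k x) (r k y))).
  move=> muM_neq0; have Ls_pos := Ls_gt0 x y muM_neq0.
  have km_pos k := kmargin_gt0 (r k) mu_ge0 M_trans muM_neq0.
  have M_pos : 0 < M x y.
    by rewrite lt0r M_ge0 andbT; apply: contraNneq muM_neq0 => ->; rewrite mulr0.
  have [tLs_pos tkm_pos] : 0 < ktensor Ls x y /\ 0 < ktensor kmargins x y.
    by split; apply: prodr_gt0.
  by rewrite !ln_div ?posrE // /ktensor !ln_prod // sumrB addrA subrK.
under [X in _ + X]eq_bigr => k _.
  rewrite (KLsum_kmargin mu_ge0 M_trans (fun x y muM => Ls_gt0 x y muM k)).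
  rewrite -(@sum_edge_margin _ _ _ (r k) mu M
              (fun u v => ln (kmargin (r k) mu M u v) - ln (Ls k u v))).
  over.
rewrite exchange_big /KLsum -big_split; apply: eq_bigr => x _ /=.
rewrite exchange_big -big_split; apply: eq_bigr => y _ /=.
rewrite -big_distrr -mulrDr /=.
by have [->|/ln_ratio ->] := eqVneq (mu x * M x y) 0; rewrite ?mul0r.
Qed.

Theorem inf_KL_ktensor :
  ereal_inf [set KL mu M (ktensor Ls) | Ls in
     [set Ls : forall k, U k -> U k -> R | forall k, is_trans (Ls k)]]%classic
  = (KLsum mu M (ktensor kmargins))%:E.
Proof.
have KL_kmargins : KL mu M (ktensor kmargins) =
    (KLsum mu M (ktensor kmargins))%:E.
  apply: KL_EFin => x y muM_neq0; rewrite gt_eqF // prodr_gt0 // => k _.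
  exact: kmargin_gt0.
rewrite -KL_kmargins; apply: ereal_inf_min.
  exists (fun k => kmargin_ext (r k) mu M) => [k|]; first exact: kmargin_ext_trans.
  apply: eq_KL => x y muM_neq0; apply: eq_bigr => k _.
  exact: (kmargin_extE (r k) mu_ge0 M_trans muM_neq0).
move=> _ [Ls Ls_trans <-].
have [[x [y [muM_neq0 Ls0]]]|Ls_supp] :=
  pselect (exists x y, mu x * M x y != 0 /\ ktensor Ls x y = 0).
  by rewrite (KL_pinfty muM_neq0 Ls0) leey.
have Ls_gt0 x y : mu x * M x y != 0 -> forall k, 0 < Ls k (r k x) (r k y).
  move=> muM_neq0 k; rewrite lt0r (proj1 (Ls_trans k)) andbT.
  apply: contra_notN Ls_supp => /eqP Ls0; exists x, y; split => //.
  by rewrite /ktensor (bigD1 k) //= Ls0 mul0r.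
rewrite KL_kmargins KL_EFin => [|x y muM_neq0]; last first.
  by rewrite gt_eqF // prodr_gt0 // => k _; exact: Ls_gt0.
rewrite lee_fin (KLsum_ktensor Ls_gt0) lerDl sumr_ge0 // => k _.
apply: KLsum_kmargin_ge0 => // x y muM_neq0; exact: Ls_gt0.
Qed.

End ProductKernels.

Section Refinement.
Variables (R : realType) (T U1 U2 : finType) (f1 : T -> U1) (g : U1 -> U2) (f2 : T -> U2).
Hypothesis f2E : forall x, f2 x = g (f1 x).
Variables (mu : T -> R) (M : T -> T -> R).

Let sum_fiber_comp (F : T -> R) u :
  \sum_(x | f2 x == u) F x = \sum_(w | g w == u) \sum_(x | f1 x == w) F x.
Proof.
rewrite (partition_big f1 (fun w => g w == u)) => [|x]; last by rewrite f2E.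
apply: eq_bigr => w /eqP gw; apply: eq_bigl => x.
by rewrite f2E; case: (eqVneq (f1 x) w) => [->|]; rewrite ?gw ?eqxx ?andbF.
Qed.

Lemma margin_comp u : margin f2 mu u = \sum_(w | g w == u) margin f1 mu w.
Proof. exact: sum_fiber_comp. Qed.

Lemma edge_margin_comp u v : edge_margin f2 mu M u v =
  \sum_(w | g w == u) \sum_(z | g z == v) edge_margin f1 mu M w z.
Proof.
rewrite /edge_margin sum_fiber_comp; apply: eq_bigr => w _.
by rewrite [RHS]exchange_big; apply: eq_bigr => x _; rewrite sum_fiber_comp.
Qed.

End Refinement.

Definition coord (I : finType) (Y : I -> finType) (i : I) (x : prodT Y) : Y i := x i.
Arguments coord {I Y} i x.

Definition extend (I : finType) (Y : I -> finType) (A : {set I}) (w : XS Y A)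
    (x : prodT Y) : prodT Y :=
  @finfun _ Y (fun j => if (j \in A) =P true is ReflectT jA then w (exist _ j jA) else x j).

Lemma restr_extend (I : finType) (Y : I -> finType) (A : {set I}) (w : XS Y A) x :
  restr A (extend w x) = w.
Proof.
apply/ffunP => -[j jA]; rewrite !ffunE /=.
by case: eqP => [jA'|]; [rewrite (bool_irrelevance jA' jA) | rewrite jA].
Qed.

Section Partition.
Variables (R : realType) (d n : nat) (X : 'I_d -> finType) (S : 'I_n -> {set 'I_d}).
Hypothesis S_partition : is_partition S.

Let S_cover j : exists i, j \in S i. Proof. by case: S_partition => _ []. Qed.
Let blk j := xchoose (S_cover j).
Let blkP j : j \in S (blk j). Proof. exact: (xchooseP (S_cover j)). Qed.
Let blk_uniq i j : j \in S i -> blk j = i.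
Proof.
move=> jSi; apply/eqP; apply: contraT => ne; case: S_partition => _ [disj _].
by have := disjointFr (disj _ _ ne) (blkP j); rewrite jSi.
Qed.

Lemma prod_blocks (F : 'I_d -> R) :
  \prod_j F j = \prod_i \prod_(k : subT (S i)) F (val k).
Proof.
rewrite (partition_big blk predT) //=; apply: eq_bigr => i _.
rewrite -(big_sub (S i) F); apply: eq_bigl => j /=.
by apply/eqP/idP => [<-|/blk_uniq].
Qed.

Definition blocks_of (x : prodT X) : {dffun forall i, XS X (S i)} :=
  @finfun _ (fun i => XS X (S i)) (fun i => restr (S i) x).

Lemma blocks_ofE x i : blocks_of x i = restr (S i) x.
Proof. by rewrite /blocks_of ffunE. Qed.

Lemma blocks_of_bij : bijective blocks_of.
Proof.
exists (fun f : {dffun forall i, XS X (S i)} =>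
  @finfun _ X (fun j => f (blk j) (exist _ j (blkP j)))).
  by move=> x; apply/ffunP => j; rewrite !ffunE.
move=> f; apply/ffunP => i; apply/ffunP => -[j jSi]; rewrite !ffunE /=.
by move: (blkP j); rewrite (blk_uniq jSi) => jSi'; rewrite (bool_irrelevance jSi' jSi).
Qed.

Lemma sum_prod_restr (g : forall i, XS X (S i) -> R) :
  \sum_x \prod_i g i (restr (S i) x) = \prod_i \sum_z g i z.
Proof.
rewrite -sum_dffun_prod (reindex blocks_of) /=; last exact/onW_bij/blocks_of_bij.
by apply: eq_bigr => x _; apply: eq_bigr => i _; rewrite blocks_ofE.
Qed.

Lemma sum_prod_restr_fiber i0 (z0 : XS X (S i0)) (g : forall i, XS X (S i) -> R) :
  \sum_(x | restr (S i0) x == z0) \prod_i g i (restr (S i) x) =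
  g i0 z0 * \prod_(i | i != i0) \sum_z g i z.
Proof.
rewrite -sum_dffun_prod_fiber (reindex blocks_of) /=; last exact/onW_bij/blocks_of_bij.
apply: eq_big => [x|x _]; first by rewrite /blocks_of ffunE.
by apply: eq_bigr => i _; rewrite blocks_ofE.
Qed.

Lemma ktensor_blocks (Ls : forall j, X j -> X j -> R) :
  ktensor (fun i => restr (S i))
    (fun i => ktensor (@coord _ (fun k : subT (S i) => X (val k))) (fun k => Ls (val k))) =
  ktensor (@coord _ X) Ls.
Proof.
apply/funext => x; apply/funext => y; rewrite /ktensor prod_blocks.
by apply: eq_bigr => i _; apply: eq_bigr => k _; rewrite /coord !ffunE.
Qed.

Section Kernels.
Variables (pi : prodT X -> R) (P : prodT X -> prodT X -> R).
Hypothesis pi_gt0 : forall x, 0 < pi x.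
Hypothesis pi_sum : \sum_x pi x = 1.
Hypothesis P_trans : is_trans P.

Let pi_ge0 x : 0 <= pi x. Proof. exact: ltW. Qed.

Local Notation Pblocks := (fun i => kmarg pi P (S i)).
Local Notation Pcoords := (fun j => kmargin (coord j) pi P).
Local Notation Pcoords_on i :=
  (ktensor (@coord _ (fun k : subT (S i) => X (val k))) (fun k => kmargin (coord (val k)) pi P)).

Lemma marg_gt0 i (w : XS X (S i)) : 0 < marg pi (S i) w.
Proof.
have [x _ | X_empty] := pickP (@predT (prodT X)); last first.
  by move: pi_sum; rewrite big_pred0 // => /esym/eqP; rewrite oner_eq0.
apply: lt_le_trans (pi_gt0 (extend w x)) _.
rewrite /marg (bigD1 (extend w x)) ?restr_extend //= lerDl.
by rewrite sumr_ge0.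
Qed.

Lemma kmarg_trans i : is_trans (kmarg pi P (S i)).
Proof.
split=> [u v|u]; first exact: kmargin_ge0.
by apply: kmargin_rows => //; rewrite gt_eqF // marg_gt0.
Qed.

Lemma tensor_kmarg_trans : is_trans (tensor Pblocks).
Proof.
split=> [x y|x]; first by apply: prodr_ge0 => i _; case: (kmarg_trans i).
have := sum_prod_restr (fun i => kmarg pi P (S i) (restr (S i) x)); rewrite /= => ->.
by apply: big1 => i _; case: (kmarg_trans i).
Qed.

Lemma edge_margin_tensor_kmarg i (w z : XS X (S i)) :
  edge_margin (restr (S i)) pi (tensor Pblocks) w z = edge_margin (restr (S i)) pi P w z.
Proof.
rewrite -(margin_kmargin _ pi_ge0 P_trans) /edge_margin /margin big_distrl /=.
apply: eq_bigr => x /eqP <-; rewrite -big_distrr /=; congr (_ * _).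
have := sum_prod_restr_fiber z (fun i' => kmarg pi P (S i') (restr (S i') x)).
rewrite /= => ->; rewrite big1 ?mulr1 // => i' _.
by case: (kmarg_trans i').
Qed.

Lemma kmargin_coord_tensor_kmarg j :
  kmargin (coord j) pi (tensor Pblocks) =2 kmargin (coord j) pi P.
Proof.
pose at_j (w : XS X (S (blk j))) := w (exist _ j (blkP j)).
have coordE (x : prodT X) : coord j x = at_j (restr (S (blk j)) x) by rewrite /at_j ffunE.
move=> u v; rewrite /kmargin !(edge_margin_comp coordE).
by under eq_bigr do under eq_bigr do rewrite edge_margin_tensor_kmarg.
Qed.

Lemma kmargin_coord_kmarg i (k : subT (S i)) :
  kmargin (coord k) (marg pi (S i)) (kmarg pi P (S i)) =2 kmargin (coord (val k)) pi P.
Proof.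
pose at_k (w : XS X (S i)) := w k.
have coordE (x : prodT X) : coord (val k) x = at_k (restr (S i) x) by rewrite /at_k ffunE.
move=> u v; rewrite /kmargin (edge_margin_comp coordE) (margin_comp coordE).
congr (_ / _); apply: eq_bigr => w _; apply: eq_bigr => z _.
exact: (margin_kmargin _ pi_ge0 P_trans).
Qed.

Lemma Idep_eq_KLsum_coords : Idep pi P = (KLsum pi P (ktensor coord Pcoords))%:E.
Proof. exact: inf_KL_ktensor. Qed.

Lemma Ipart_eq_KLsum_blocks : Ipart pi P S = (KLsum pi P (tensor Pblocks))%:E.
Proof. exact: inf_KL_ktensor. Qed.

Lemma Idep_tensor_eq_KLsum :
  Idep pi (tensor Pblocks) = (KLsum pi (tensor Pblocks) (ktensor coord Pcoords))%:E.
Proof.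
rewrite /Idep (inf_KL_ktensor coord pi_ge0 tensor_kmarg_trans); congr (KLsum _ _ _)%:E.
apply/funext => x; apply/funext => y; apply: eq_bigr => j _.
exact: kmargin_coord_tensor_kmarg.
Qed.

Lemma Idep_kmarg_eq_KLsum i : Idep (marg pi (S i)) (kmarg pi P (S i)) =
  (KLsum (marg pi (S i)) (kmarg pi P (S i)) (Pcoords_on i))%:E.
Proof.
have marg_ge0 w : 0 <= marg pi (S i) w by rewrite ltW ?marg_gt0.
rewrite /Idep (inf_KL_ktensor coord marg_ge0 (kmarg_trans i)); congr (KLsum _ _ _)%:E.
apply/funext => w; apply/funext => z; apply: eq_bigr => k _.
exact: kmargin_coord_kmarg.
Qed.

Lemma KLsum_coords_split : KLsum pi P (ktensor coord Pcoords) =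
  KLsum pi P (tensor Pblocks) +
  \sum_i KLsum (marg pi (S i)) (kmarg pi P (S i)) (Pcoords_on i).
Proof.
rewrite -ktensor_blocks (KLsum_ktensor pi_ge0 P_trans) // => x y muM_neq0 i.
by apply: prodr_gt0 => k _; rewrite /coord !ffunE; exact: kmargin_gt0.
Qed.

Lemma KLsum_tensor_coords_split :
  KLsum pi (tensor Pblocks) (ktensor coord Pcoords) =
  \sum_i KLsum (marg pi (S i)) (kmarg pi P (S i)) (Pcoords_on i).
Proof.
have kmarg_tensor i : kmargin (restr (S i)) pi (tensor Pblocks) = kmarg pi P (S i).
  apply/funext => w; apply/funext => z.
  by rewrite /kmargin edge_margin_tensor_kmarg.
rewrite -ktensor_blocks (KLsum_ktensor pi_ge0 tensor_kmarg_trans).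
  rewrite (_ : ktensor _ _ = tensor Pblocks); last first.
    by apply/funext => x; apply/funext => y; apply: eq_bigr => i _; rewrite kmarg_tensor.
  rewrite KLsum_self add0r; apply: eq_bigr => i _; by rewrite kmarg_tensor.
move=> x y muM_neq0 i; apply: prodr_gt0 => k _; rewrite /coord !ffunE.
by rewrite -kmargin_coord_tensor_kmarg (kmargin_gt0 (coord (val k)) pi_ge0 tensor_kmarg_trans).
Qed.

End Kernels.

End Partition.

Unset Implicit Arguments. Set Strict Implicit.

Theorem corollary2p25 (R : realType) (d : nat) (X : 'I_d -> finType)
  (n : nat) (S : 'I_n -> {set 'I_d})
  (pi : prodT X -> R) (P : prodT X -> prodT X -> R) :
  is_partition S -> is_distr pi -> is_pos pi -> is_trans P ->
  Idep pi P = (Ipart pi P S + Idep pi (tensor (fun i => kmarg pi P (S i))))%E /\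
  (Ipart pi P S + Idep pi (tensor (fun i => kmarg pi P (S i))))%E =
  (Ipart pi P S + \sum_(i < n) Idep (marg pi (S i)) (kmarg pi P (S i)))%E.
Proof.
move=> S_part [_ pi_sum] pi_gt0 P_trans.
rewrite (Idep_eq_KLsum_coords pi_gt0 P_trans) (Ipart_eq_KLsum_blocks S pi_gt0 P_trans).
rewrite (Idep_tensor_eq_KLsum S_part pi_gt0 pi_sum P_trans).
under eq_bigr do rewrite (Idep_kmarg_eq_KLsum S pi_gt0 pi_sum P_trans).
rewrite sumEFin -!EFinD (KLsum_coords_split S_part pi_gt0 P_trans).
by rewrite (KLsum_tensor_coords_split S_part pi_gt0 pi_sum P_trans).
Qed.
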